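(* Let $\psi$ be the four-taxon network described in the context, with parameters $x,y>0$, $w=0$ and $\gamma\in[0,1]$, and one gene copy sampled per taxon. Under the multispecies network coalescent, as $x\to\infty$ the gene tree topology probabilities converge to: $P(((b,c),a),d)\to \gamma-(\gamma-\tfrac{\gamma^2}{3})e^{-y}$; $P(((b,c),d),a)\to (1-\gamma)-(\tfrac{2}{3}-\tfrac{\gamma}{3}-\tfrac{\gamma^2}{3})e^{-y}$; $P((a,b),(c,d))\to\gamma(1-\gamma)e^{-y}$ and $P((a,c),(b,d))\to\gamma(1-\gamma)e^{-y}$; $P(((a,b),c),d)\to\tfrac{\gamma^2}{3}e^{-y}$ and $P(((a,c),b),d)\to\tfrac{\gamma^2}{3}e^{-y}$; $P(a,(b,(c,d)))\to\tfrac{(1-\gamma)^2}{3}e^{-y}$ and $P(((b,d),c),a)\to\tfrac{(1-\gamma)^2}{3}e^{-y}$; and each of the remaining seven rooted gene tree topologies on $\{a,b,c,d\}$, namely $((a,d),(b,c))$, $(((a,b),d),c)$, $(b,(a,(c,d)))$, $(((a,d),b),c)$, $(((b,d),a),c)$, $(((a,c),d),b)$, $(((a,d),c),b)$, has probability converging to $0$.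
   Context: The network $\psi$ on taxa $A,B,C,D$ (gene copies $a,b,c,d$): the root $r$ has two children $p$ and $q$, with edges $(r,p)$ and $(r,q)$ both of length $x$. Node $p$ has children the leaf $A$ and a reticulation node $h$; node $q$ has children the leaf $D$ and $h$. The reticulation edges $(p,h)$ and $(q,h)$ have length $w=0$ and inheritance probabilities $\gamma$ and $1-\gamma$ respectively. Node $h$ has a single child $m$ via an edge of length $y$, and $m$ has the two leaf children $B$ and $C$. (Pendant edge lengths to leaves are irrelevant with one sample per taxon.) Multispecies network coalescent: gene lineages are traced backward in time from the leaves; within each branch every pair of lineages present coalesces independently at rate 1 per coalescent unit for the branch's duration; when a lineage reaches a reticulation node it independently enters the incoming edge $b$ with probability equal to its inheritance probability; above the root all remaining lineages coalesce. $P(g)$ is the resulting probability of gene tree topology $g$. *)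

From Stdlib Require Import Reals List Arith Lra.
Import ListNotations.
Open Scope R_scope.

Inductive gtree : Type := Leaf (i : nat) | Node (l r : gtree).

Definition ta : gtree := Leaf 0.
Definition tb : gtree := Leaf 1.
Definition tc : gtree := Leaf 2.
Definition td : gtree := Leaf 3.

(** Cluster of a tree, encoded as a bitmask (leaf i |-> 2^i). *)
Fixpoint clus (t : gtree) : nat :=
  match t with Leaf i => 2 ^ i | Node l r => clus l + clus r end%nat.

Fixpoint ints (t : gtree) : list nat :=
  match t with Leaf _ => [] | Node l r => clus (Node l r) :: ints l ++ ints r end.

(** Two gene trees on {a,b,c,d} have the same rooted topology iff they have
    the same (multi)set of clusters. *)
Definition same_topology (t g : gtree) : bool :=
  forallb (fun c => Nat.eqb (count_occ Nat.eq_dec (ints t) c)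
                            (count_occ Nat.eq_dec (ints g) c)) (seq 0 16).

Definition dist (A : Type) := list (R * A).
Definition dret {A} (a : A) : dist A := [(1, a)].
Definition dbind {A B} (d : dist A) (f : A -> dist B) : dist B :=
  flat_map (fun pa => map (fun qb => (fst pa * fst qb, snd qb)) (f (snd pa))) d.

Definition sumR (l : list R) : R := fold_right Rplus 0 l.
Definition prodR (l : list R) : R := fold_right Rmult 1 l.

Fixpoint picks {A} (l : list A) : list (A * list A) :=
  match l with
  | [] => []
  | x :: r => (x, r) :: map (fun yr => (fst yr, x :: snd yr)) (picks r)
  end.

Fixpoint upairs {A} (l : list A) : list (A * A * list A) :=
  match l with
  | [] => []
  | x :: r => map (fun yr => (x, fst yr, snd yr)) (picks r)
              ++ map (fun p => (fst (fst p), snd (fst p), x :: snd p)) (upairs r)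
  end.

Definition coal1 (ls : list gtree) : dist (list gtree) :=
  let m := INR (length (upairs ls)) in
  map (fun p => (/ m, Node (fst (fst p)) (snd (fst p)) :: snd p)) (upairs ls).

Fixpoint coaln (k : nat) (ls : list gtree) : dist (list gtree) :=
  match k with O => dret ls | S k' => dbind (coal1 ls) (coaln k') end.

(** Total coalescence rate with i lineages (each pair at rate 1). *)
Definition lam (i : nat) : R := INR i * (INR i - 1) / 2.

(** Transition probability of the pure-death (lineage-counting) process with
    rates lam i from n lineages to k lineages (1 <= k <= n) in time t:
    standard formula for a pure death chain with distinct rates. *)
Definition trans (n k : nat) (t : R) : R :=
  prodR (map lam (seq (k + 1) (n - k))) *
  sumR (map (fun j => exp (- lam j * t) /
                prodR (map (fun i => lam i - lam j)
                   (filter (fun i => negb (Nat.eqb i j)) (seq k (n - k + 1)))))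
            (seq k (n - k + 1))).

(** Coalescent within a branch of length t: the number of lineages drops from
    n to k with probability trans n k t, and the n - k coalescences merge
    uniformly random pairs (jump chain of Kingman's coalescent). *)
Definition branch (t : R) (ls : list gtree) : dist (list gtree) :=
  let n := length ls in
  let k0 := Nat.min 1 n in
  flat_map (fun k => map (fun pl => (trans n k t * fst pl, snd pl))
                         (coaln (n - k) ls))
           (seq k0 (n - k0 + 1)).

(** Above the root all lineages coalesce. *)
Definition root_coal (ls : list gtree) : dist (list gtree) :=
  coaln (length ls - 1) ls.

(** At the reticulation node h each lineage independently goes to the
    parent p with probability gamma and to q with probability 1 - gamma. *)
Fixpoint splits (gamma : R) (ls : list gtree) : dist (list gtree * list gtree) :=
  match ls with
  | [] => dret ([], [])
  | t :: r => map (fun pq => (gamma * fst pq, (t :: fst (snd pq), snd (snd pq)))) (splits gamma r)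
           ++ map (fun pq => ((1 - gamma) * fst pq, (fst (snd pq), t :: snd (snd pq)))) (splits gamma r)
  end.

(** The MSNC on psi: branch (h,m) of length y with lineages b, c; the
    reticulation edges (p,h),(q,h) have length w = 0; branches (r,p) and
    (r,q) of length x carry a (resp. d) plus the lineages that went there;
    then all remaining lineages coalesce above the root r. *)
Definition psi_dist (x y gamma : R) : dist (list gtree) :=
  dbind (branch y [tb; tc]) (fun lh =>
  dbind (splits gamma lh) (fun pq =>
  dbind (branch x (ta :: fst pq)) (fun lp =>
  dbind (branch x (td :: snd pq)) (fun lq =>
  root_coal (lp ++ lq))))).

Definition gt_prob (x y gamma : R) (g : gtree) : R :=
  sumR (map fst (filter (fun pl => match snd pl with
                                   | [t] => same_topology t g
                                   | _ => false end) (psi_dist x y gamma))).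

Definition lim_infty (f : R -> R) (L : R) : Prop :=
  forall eps, eps > 0 -> exists M, forall x, x > M -> Rabs (f x - L) < eps.

From Stdlib Require Import Reals List Lra Lia.
From Coquelicot Require Import Coquelicot.
Open Scope R_scope.

(* As x -> oo, the lineage-counting chain on each long branch (r,p), (r,q) is
   absorbed at a single lineage: trans n 1 x -> 1, while trans n k x -> 0 for
   k >= 2 because every rate lam k with k >= 2 is positive.  P(g) is a
   polynomial in these transition probabilities whose coefficients involve only
   gamma and the branch (h,m) of length y, where trans 2 1 y = 1 - e^-y and
   trans 2 2 y = e^-y; substituting the limits gives each limiting
   probability. *)

Lemma lim_infty_is_lim (f : R -> R) (L : R) : lim_infty f L <-> is_lim f p_infty L.
Proof.
  rewrite <- is_lim_spec; split.
  - intros Hf eps; destruct (Hf eps (cond_pos eps)) as [M HM]; exists M; auto.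
  - intros Hf eps Heps; destruct (Hf (mkposreal eps Heps)) as [M HM]; exists M; auto.
Qed.

Lemma lim_infty_const (c : R) : lim_infty (fun _ => c) c.
Proof. apply lim_infty_is_lim, is_lim_const. Qed.

Lemma lim_infty_plus (f g : R -> R) (L M : R) :
  lim_infty f L -> lim_infty g M -> lim_infty (fun x => f x + g x) (L + M).
Proof. rewrite !lim_infty_is_lim; apply is_lim_plus'. Qed.

Lemma lim_infty_mult (f g : R -> R) (L M : R) :
  lim_infty f L -> lim_infty g M -> lim_infty (fun x => f x * g x) (L * M).
Proof.
  rewrite !lim_infty_is_lim; intros Hf Hg.
  exact (is_lim_mult f g p_infty L M Hf Hg I).
Qed.

Lemma lim_infty_eq_limit (f : R -> R) (L M : R) :
  lim_infty f L -> L = M -> lim_infty f M.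
Proof. intros Hf <-; exact Hf. Qed.

Lemma lim_infty_ext (f g : R -> R) (L : R) :
  (forall x, f x = g x) -> lim_infty g L -> lim_infty f L.
Proof.
  intros Efg Hg eps Heps; destruct (Hg eps Heps) as [M HM].
  exists M; intros x Hx; rewrite Efg; auto.
Qed.

Lemma lim_infty_exp_neg (c : R) : 0 < c -> lim_infty (fun t => exp (- c * t)) 0.
Proof.
  intros Hc eps Heps; exists (- ln eps / c); intros t Ht.
  rewrite Rminus_0_r, Rabs_pos_eq by (left; apply exp_pos).
  rewrite <- (exp_ln eps) by lra; apply exp_increasing.
  apply (Rmult_lt_compat_l c) in Ht; [|lra].
  replace (c * (- ln eps / c)) with (- ln eps) in Ht by (field; lra); lra.
Qed.

Lemma lim_infty_sumR_zero {A : Type} (l : list A) (f : A -> R -> R) :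
  (forall a, In a l -> lim_infty (f a) 0) ->
  lim_infty (fun x => sumR (map (fun a => f a x) l)) 0.
Proof.
  induction l as [|a l IH]; intros Hl; simpl; [apply lim_infty_const|].
  rewrite <- (Rplus_0_r 0); apply lim_infty_plus; [apply Hl; left; reflexivity|].
  apply IH; intros b Hb; apply Hl; right; exact Hb.
Qed.

Lemma lam_1 : lam 1 = 0.
Proof. unfold lam; simpl; lra. Qed.

Lemma lam_2 : lam 2 = 1.
Proof. unfold lam; simpl; lra. Qed.

Lemma lam_pos (i : nat) : (2 <= i)%nat -> 0 < lam i.
Proof.
  intros Hi; apply le_INR in Hi; simpl in Hi.
  unfold lam; apply Rdiv_lt_0_compat; nra.
Qed.

Lemma lim_infty_exp_lam_div (j : nat) (c : R) :
  (2 <= j)%nat -> lim_infty (fun t => exp (- lam j * t) / c) 0.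
Proof.
  intros Hj; rewrite <- (Rmult_0_l (/ c)).
  apply lim_infty_mult; [|apply lim_infty_const].
  apply lim_infty_exp_neg, lam_pos, Hj.
Qed.

Lemma prodR_map_pos {A : Type} (f : A -> R) (l : list A) :
  (forall a, In a l -> 0 < f a) -> 0 < prodR (map f l).
Proof.
  induction l as [|a l IH]; intros Hl; simpl; [lra|].
  apply Rmult_lt_0_compat; [apply Hl; left; reflexivity|].
  apply IH; intros b Hb; apply Hl; right; exact Hb.
Qed.

Lemma lim_infty_trans_to_1 (n : nat) : lim_infty (trans n 1) 1.
Proof.
  unfold trans; replace (n - 1 + 1)%nat with (S (n - 1)) by lia; simpl.
  set (m := (n - 1)%nat).
  assert (Hfilter : filter (fun i => negb (i =? 1)) (seq 2 m) = seq 2 m).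
  { apply forallb_filter_id, forallb_forall; intros i Hi.
    apply in_seq in Hi; apply Bool.negb_true_iff, Nat.eqb_neq; lia. }
  assert (Hden : map (fun i => lam i - lam 1) (seq 2 m) = map lam (seq 2 m)).
  { apply map_ext; intros i; rewrite lam_1; ring. }
  rewrite Hfilter, Hden.
  set (C := prodR (map lam (seq 2 m))).
  assert (HC : 0 < C).
  { apply prodR_map_pos; intros i Hi; apply in_seq in Hi; apply lam_pos; lia. }
  (* The j = 1 summand is constant (lam 1 = 0) with denominator C itself. *)
  rewrite <- (Rinv_r C), <- (Rplus_0_r (/ C)) by lra.
  apply lim_infty_mult; [apply lim_infty_const|].
  apply lim_infty_plus.
  - apply (lim_infty_ext _ (fun _ => / C)).
    { intros t; rewrite lam_1, Ropp_0, Rmult_0_l, exp_0; unfold Rdiv; ring. }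
    apply lim_infty_const.
  - apply lim_infty_sumR_zero; intros j Hj; apply in_seq in Hj.
    apply lim_infty_exp_lam_div; lia.
Qed.

Lemma lim_infty_trans_to_0 (n k : nat) : (2 <= k)%nat -> lim_infty (trans n k) 0.
Proof.
  intros Hk; unfold trans.
  rewrite <- (Rmult_0_r (prodR (map lam (seq (k + 1) (n - k))))).
  apply lim_infty_mult; [apply lim_infty_const|].
  apply lim_infty_sumR_zero; intros j Hj; apply in_seq in Hj.
  apply lim_infty_exp_lam_div; lia.
Qed.

Lemma trans_2_2 (t : R) : trans 2 2 t = exp (- t).
Proof.
  unfold trans; simpl; rewrite lam_2, Ropp_mult_distr_l_reverse, !Rmult_1_l; field.
Qed.

Lemma trans_2_1 (t : R) : trans 2 1 t = 1 - exp (- t).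
Proof.
  unfold trans; simpl; rewrite lam_1, lam_2, Ropp_0, Rmult_0_l, exp_0.
  rewrite Ropp_mult_distr_l_reverse, !Rmult_1_l; field.
Qed.

Ltac lim_infty_poly :=
  lazymatch goal with
  | |- lim_infty (fun _ => ?c) _ => apply lim_infty_const
  | |- lim_infty (fun x => @?a x + @?b x) _ => apply (lim_infty_plus a b); lim_infty_poly
  | |- lim_infty (fun x => @?a x * @?b x) _ => apply (lim_infty_mult a b); lim_infty_poly
  | |- lim_infty (fun x => trans _ 1 x) _ => apply lim_infty_trans_to_1
  | |- lim_infty (fun x => trans _ _ x) _ => apply lim_infty_trans_to_0; lia
  end.

Ltac gt_prob_limit :=
  eapply lim_infty_eq_limit;
  [ cbv -[lim_infty trans exp INR Rplus Rmult Rinv Ropp Rminus Rdiv IZR]; lim_infty_poly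
  | rewrite ?trans_2_1, ?trans_2_2; simpl INR; field ].

Theorem mainTheorem2 (y gamma : R) (hy : 0 < y) (hg0 : 0 <= gamma) (hg1 : gamma <= 1) :
  let P := fun g => (fun x => gt_prob x y gamma g) in
  lim_infty (P (Node (Node (Node tb tc) ta) td)) (gamma - (gamma - gamma ^ 2 / 3) * exp (- y)) /\
  lim_infty (P (Node (Node (Node tb tc) td) ta))
            ((1 - gamma) - (2 / 3 - gamma / 3 - gamma ^ 2 / 3) * exp (- y)) /\
  lim_infty (P (Node (Node ta tb) (Node tc td))) (gamma * (1 - gamma) * exp (- y)) /\
  lim_infty (P (Node (Node ta tc) (Node tb td))) (gamma * (1 - gamma) * exp (- y)) /\
  lim_infty (P (Node (Node (Node ta tb) tc) td)) (gamma ^ 2 / 3 * exp (- y)) /\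
  lim_infty (P (Node (Node (Node ta tc) tb) td)) (gamma ^ 2 / 3 * exp (- y)) /\
  lim_infty (P (Node ta (Node tb (Node tc td)))) ((1 - gamma) ^ 2 / 3 * exp (- y)) /\
  lim_infty (P (Node (Node (Node tb td) tc) ta)) ((1 - gamma) ^ 2 / 3 * exp (- y)) /\
  lim_infty (P (Node (Node ta td) (Node tb tc))) 0 /\
  lim_infty (P (Node (Node (Node ta tb) td) tc)) 0 /\
  lim_infty (P (Node tb (Node ta (Node tc td)))) 0 /\
  lim_infty (P (Node (Node (Node ta td) tb) tc)) 0 /\
  lim_infty (P (Node (Node (Node tb td) ta) tc)) 0 /\
  lim_infty (P (Node (Node (Node ta tc) td) tb)) 0 /\
  lim_infty (P (Node (Node (Node ta td) tc) tb)) 0.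
Proof.
  intros P; unfold P; repeat split; gt_prob_limit.
Qed.
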